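(* Let $A_1,\dots,A_{12}$ be the vertices of a regular icosahedron in $\mathbb R^3$ with centre $O$, and let $\Gamma$ be a sphere centred at $O$. For each $\lambda\in\{2,4,6\}$ the sum $\sum_{i=1}^{12}|MA_i|^{\lambda}$ does not depend on the position of $M\in\Gamma$.
   Context: $|MA|$ denotes Euclidean distance. *)

From Stdlib Require Import Reals Lra List.
Import ListNotations.
Open Scope R_scope.

Definition point : Type := (R * R * R)%type.

Definition px (p : point) : R := fst (fst p).
Definition py (p : point) : R := snd (fst p).
Definition pz (p : point) : R := snd p.

Definition mkpt (x y z : R) : point := (x, y, z).

Definition dot (p q : point) : R := px p * px q + py p * py q + pz p * pz q.

Definition padd (p q : point) : point := mkpt (px p + px q) (py p + py q) (pz p + pz q).
Definition psub (p q : point) : point := mkpt (px p - px q) (py p - py q) (pz p - pz q).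
Definition pscale (s : R) (p : point) : point := mkpt (s * px p) (s * py p) (s * pz p).

Definition dist3 (p q : point) : R := sqrt (dot (psub p q) (psub p q)).

Definition phi : R := (1 + sqrt 5) / 2.

(* The 12 vertices of the standard regular icosahedron centred at the origin:
   cyclic permutations of (0, +-1, +-phi). *)
Definition std_icosa_list : list point :=
  [ mkpt 0 1 phi; mkpt 0 1 (- phi); mkpt 0 (-1) phi; mkpt 0 (-1) (- phi);
    mkpt 1 phi 0; mkpt 1 (- phi) 0; mkpt (-1) phi 0; mkpt (-1) (- phi) 0;
    mkpt phi 0 1; mkpt phi 0 (-1); mkpt (- phi) 0 1; mkpt (- phi) 0 (-1) ].

Definition std_icosa (j : nat) : point := nth j std_icosa_list (mkpt 0 0 0).

(* An orthogonal transformation of R^3 (fixes the origin, preserves the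
   inner product; such maps are automatically linear). *)
Definition orthogonal_map (L : point -> point) : Prop :=
  forall x y : point, dot (L x) (L y) = dot x y.

(* A_0, ..., A_11 are (in some order) the vertices of a regular icosahedron
   with centre O: they are the image of the standard icosahedron under a
   similarity x |-> O + s * L x with s > 0 and L orthogonal, and the
   labelling is a bijection onto the 12 vertices. *)
Definition regular_icosahedron (A : nat -> point) (O : point) : Prop :=
  exists (s : R) (L : point -> point),
    0 < s /\ orthogonal_map L /\
    (forall i, (i < 12)%nat ->
       exists j, (j < 12)%nat /\ A i = padd O (pscale s (L (std_icosa j)))) /\
    (forall i k, (i < 12)%nat -> (k < 12)%nat -> A i = A k -> i = k).

(* sum_{i=1}^{12} |M A_i|^lam  (indices shifted to 0..11). *)
Definition icosa_power_sum (A : nat -> point) (M : point) (lam : nat) : R :=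
  sum_f_R0 (fun i => (dist3 M (A i)) ^ lam) 11.

From Stdlib Require Import Reals Lra Lia List Permutation.
Import ListNotations.
Open Scope R_scope.

(* Put w = M - O and let L^T w be the coordinates of w in the
   orthonormal frame (L e1, L e2, L e3).  Because an orthogonal map sends the
   standard basis to an orthonormal frame, and every vector is the sum of its
   projections on such a frame, we get  w . L v = (L^T w) . v  and
   |L^T w| = |w| = r.  Hence, writing v_j for the standard vertices and
   t_j = (L^T w) . v_j,
      |M A_j|^2 = r^2 + s^2 |v_j|^2 - 2 s t_j = a - 2 s t_j,
   with a independent of M since all |v_j|^2 = 1 + phi^2.  Expanding
   (a - 2 s t)^k by the binomial theorem, sum_j |M A_j|^(2k) only depends on
   the moments sum_j t_j^i, i <= k.  For the icosahedron these moments are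
   0, 4 (1 + phi^2) r^2, 0 for i = 1, 2, 3 (vertices come in pairs +-v_j),
   so they only depend on r, which gives the claim for 2k = 2, 4, 6.
   The file establishes in turn: orthonormal frames, power sums over lists,
   relabelling of the vertices, the icosahedral moments, and the theorem. *)

Definition e1 : point := mkpt 1 0 0.
Definition e2 : point := mkpt 0 1 0.
Definition e3 : point := mkpt 0 0 1.

Ltac unfold_points :=
  unfold dot, psub, padd, pscale, mkpt, px, py, pz, e1, e2, e3 in *; simpl in *.

Lemma point_eq (p q : point) :
  px p = px q -> py p = py q -> pz p = pz q -> p = q.
Proof.
  destruct p as [[x y] z], q as [[x' y'] z']; unfold px, py, pz; simpl.
  intros -> -> ->; reflexivity.
Qed.

Lemma dot_comm (p q : point) : dot p q = dot q p.
Proof. unfold dot; ring. Qed.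

Lemma dot_ge0 (p : point) : 0 <= dot p p.
Proof. unfold dot; nra. Qed.

Lemma dist3_sq (p q : point) : dist3 p q ^ 2 = dot (psub p q) (psub p q).
Proof. unfold dist3; apply pow2_sqrt, dot_ge0. Qed.

Definition orthonormal (a b c : point) : Prop :=
  dot a a = 1 /\ dot b b = 1 /\ dot c c = 1 /\
  dot a b = 0 /\ dot a c = 0 /\ dot b c = 0.

(* The determinant D of (a, b, c) satisfies D^2 = 1 (Gram determinant), while
   D d is a combination of d.a, d.b, d.c by Cramer's rule. *)
Lemma orthonormal_complete (a b c d : point) :
  orthonormal a b c -> dot d a = 0 -> dot d b = 0 -> dot d c = 0 ->
  px d = 0 /\ py d = 0 /\ pz d = 0.
Proof.
  intros (Haa & Hbb & Hcc & Hab & Hac & Hbc) Hda Hdb Hdc.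
  set (D := px a * (py b * pz c - pz b * py c) - py a * (px b * pz c - pz b * px c)
            + pz a * (px b * py c - py b * px c)).
  assert (HD : D * D = 1).
  { assert (Gram : D * D =
      dot a a * (dot b b * dot c c - dot b c * dot b c)
      - dot a b * (dot a b * dot c c - dot b c * dot a c)
      + dot a c * (dot a b * dot b c - dot b b * dot a c))
      by (unfold D, dot; ring).
    rewrite Gram, Haa, Hbb, Hcc, Hab, Hac, Hbc; ring. }
  assert (Cx : D * px d = (py b * pz c - pz b * py c) * dot d a
                 + (py c * pz a - pz c * py a) * dot d b
                 + (py a * pz b - pz a * py b) * dot d c)
    by (unfold D, dot; ring).
  assert (Cy : D * py d = (pz b * px c - px b * pz c) * dot d a
                 + (pz c * px a - px c * pz a) * dot d b
                 + (pz a * px b - px a * pz b) * dot d c)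
    by (unfold D, dot; ring).
  assert (Cz : D * pz d = (px b * py c - py b * px c) * dot d a
                 + (px c * py a - py c * px a) * dot d b
                 + (px a * py b - py a * px b) * dot d c)
    by (unfold D, dot; ring).
  rewrite Hda, Hdb, Hdc in Cx, Cy, Cz.
  repeat split; nra.
Qed.

Lemma orthonormal_expansion (a b c w : point) :
  orthonormal a b c ->
  w = padd (pscale (dot w a) a) (padd (pscale (dot w b) b) (pscale (dot w c) c)).
Proof.
  intros Hf.
  pose proof Hf as (Haa & Hbb & Hcc & Hab & Hac & Hbc).
  set (e := padd (pscale (dot w a) a) (padd (pscale (dot w b) b) (pscale (dot w c) c))).
  assert (Hproj : forall u, dot (psub w e) u
            = dot w u - (dot w a * dot a u + dot w b * dot b u + dot w c * dot c u))
    by (intro u; unfold e; unfold_points; ring).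
  destruct (orthonormal_complete a b c (psub w e)) as (Ex & Ey & Ez); trivial.
  1-3: rewrite Hproj, ?(dot_comm b a), ?(dot_comm c a), ?(dot_comm c b),
         ?Haa, ?Hbb, ?Hcc, ?Hab, ?Hac, ?Hbc; ring.
  apply point_eq; unfold psub, mkpt, px, py, pz in *; simpl in *; lra.
Qed.

Lemma orthogonal_map_frame (L : point -> point) :
  orthogonal_map L -> orthonormal (L e1) (L e2) (L e3).
Proof.
  intros HL; unfold orthonormal; rewrite !HL; unfold_points; repeat split; ring.
Qed.

Definition transpose (L : point -> point) (w : point) : point :=
  mkpt (dot w (L e1)) (dot w (L e2)) (dot w (L e3)).

Lemma transpose_adjoint (L : point -> point) (w v : point) :
  orthogonal_map L -> dot w (L v) = dot (transpose L w) v.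
Proof.
  intros HL.
  rewrite (orthonormal_expansion _ _ _ (L v) (orthogonal_map_frame L HL)), !HL.
  unfold transpose; unfold_points; ring.
Qed.

Lemma transpose_norm (L : point -> point) (w : point) :
  orthogonal_map L -> dot (transpose L w) (transpose L w) = dot w w.
Proof.
  intros HL.
  rewrite (orthonormal_expansion _ _ _ w (orthogonal_map_frame L HL)) at 3.
  unfold transpose; unfold_points; ring.
Qed.

Lemma dist_sq_similarity (L : point -> point) (M O v : point) (s : R) :
  orthogonal_map L ->
  dist3 M (padd O (pscale s (L v))) ^ 2 =
  dot (psub M O) (psub M O) + s ^ 2 * dot v v
  - 2 * s * dot (transpose L (psub M O)) v.
Proof.
  intros HL.
  rewrite dist3_sq, <- (transpose_adjoint L _ _ HL), <- (HL v v).
  unfold_points; ring.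
Qed.

Definition sumlist (l : list R) : R := fold_right Rplus 0 l.

Definition moment (ts : list R) (i : nat) : R := sumlist (map (fun t => t ^ i) ts).

Lemma sumlist_perm (l l' : list R) : Permutation l l' -> sumlist l = sumlist l'.
Proof. induction 1; simpl in *; lra. Qed.

Lemma sumlist_app (l l' : list R) : sumlist (l ++ l') = sumlist l + sumlist l'.
Proof. induction l; simpl; lra. Qed.

Lemma sum_f_R0_sumlist (f : nat -> R) (n : nat) :
  sum_f_R0 f n = sumlist (map f (seq 0 (S n))).
Proof.
  induction n as [|n IH]; [simpl; ring|].
  rewrite seq_S, map_app, sumlist_app, <- IH; simpl; ring.
Qed.

Lemma sumlist_sum_f_R0 (g : nat -> R -> R) (n : nat) (ts : list R) :
  sumlist (map (fun t => sum_f_R0 (fun i => g i t) n) ts) =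
  sum_f_R0 (fun i => sumlist (map (g i) ts)) n.
Proof.
  induction ts as [|t ts IH]; simpl.
  - rewrite sum_cte; ring.
  - rewrite IH, <- sum_plus; reflexivity.
Qed.

Lemma sumlist_scal (c : R) (f : R -> R) (ts : list R) :
  sumlist (map (fun t => c * f t) ts) = c * sumlist (map f ts).
Proof. induction ts; simpl; [ring | rewrite IHts; ring]. Qed.

Lemma affine_power_sum (a b : R) (k : nat) (ts : list R) :
  sumlist (map (fun t => (a + b * t) ^ k) ts) =
  sum_f_R0 (fun i => C k i * b ^ i * a ^ (k - i) * moment ts i) k.
Proof.
  transitivity (sumlist (map (fun t =>
    sum_f_R0 (fun i => C k i * b ^ i * a ^ (k - i) * t ^ i) k) ts)).
  - f_equal; apply map_ext; intro t.
    rewrite Rplus_comm, binomial; apply sum_eq; intros i _.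
    rewrite Rpow_mult_distr; ring.
  - rewrite sumlist_sum_f_R0; apply sum_eq; intros i _.
    apply sumlist_scal.
Qed.

Lemma affine_power_sum_moments (a b : R) (k : nat) (ts ts' : list R) :
  (forall i, (i <= k)%nat -> moment ts i = moment ts' i) ->
  sumlist (map (fun t => (a + b * t) ^ k) ts) =
  sumlist (map (fun t => (a + b * t) ^ k) ts').
Proof.
  intros Hm; rewrite !affine_power_sum; apply sum_eq; intros i Hi.
  rewrite Hm by exact Hi; reflexivity.
Qed.

Lemma sum_relabel (A P : nat -> point) (n : nat) (g : point -> R) :
  (forall i, (i < S n)%nat -> exists j, (j < S n)%nat /\ A i = P j) ->
  (forall i k, (i < S n)%nat -> (k < S n)%nat -> A i = A k -> i = k) ->
  sum_f_R0 (fun i => g (A i)) n = sumlist (map (fun j => g (P j)) (seq 0 (S n))).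
Proof.
  intros HA Hinj.
  rewrite sum_f_R0_sumlist, <- (map_map A g), <- (map_map P g).
  apply sumlist_perm, Permutation_map, NoDup_Permutation_bis.
  - apply FinFun.Injective_map_NoDup_in; [|apply seq_NoDup].
    intros i k Hi Hk; apply in_seq in Hi, Hk; apply Hinj; lia.
  - rewrite !length_map; lia.
  - intros p Hp; apply in_map_iff in Hp as (i & <- & Hi); apply in_seq in Hi.
    destruct (HA i) as (j & Hj & ->); [lia|].
    apply in_map, in_seq; lia.
Qed.

Definition icosa_indices : list nat := seq 0 12.

Definition icosa_projections (u : point) : list R :=
  map (fun j => dot u (std_icosa j)) icosa_indices.

Lemma std_icosa_norm (j : nat) :
  In j icosa_indices -> dot (std_icosa j) (std_icosa j) = 1 + phi ^ 2.
Proof.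
  intros Hj; apply in_seq in Hj.
  do 12 (destruct j as [|j]; [unfold std_icosa; simpl; unfold_points; ring|]).
  lia.
Qed.

Lemma icosa_moments (u : point) (i : nat) : (i <= 3)%nat ->
  moment (icosa_projections u) i =
  match i with
  | 0%nat => 12
  | 2%nat => 4 * (1 + phi ^ 2) * dot u u
  | _ => 0
  end.
Proof.
  intros Hi; destruct u as [[x y] z].
  do 4 (destruct i as [|i]; [unfold moment; simpl; unfold_points; ring|]).
  lia.
Qed.

Lemma similar_icosa_power_sum (L : point -> point) (O M : point) (s r : R) (k : nat) :
  orthogonal_map L -> dist3 M O = r ->
  sumlist (map (fun j => dist3 M (padd O (pscale s (L (std_icosa j)))) ^ (2 * k))
             icosa_indices) =
  sumlist (map (fun t => (r ^ 2 + s ^ 2 * (1 + phi ^ 2) + (- 2 * s) * t) ^ k)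
             (icosa_projections (transpose L (psub M O)))).
Proof.
  intros HL HM.
  unfold icosa_projections; rewrite map_map; f_equal; apply map_ext_in; intros j Hj.
  rewrite pow_mult, dist_sq_similarity, std_icosa_norm, <- dist3_sq, HM by assumption.
  f_equal; ring.
Qed.

Theorem proposition5p1 :
  forall (A : nat -> point) (O : point),
    regular_icosahedron A O ->
    forall r : R, 0 < r ->
    forall lam : nat, (lam = 2 \/ lam = 4 \/ lam = 6)%nat ->
    forall M N : point, dist3 M O = r -> dist3 N O = r ->
      icosa_power_sum A M lam = icosa_power_sum A N lam.
Proof.
  intros A O (s & L & _ & HL & HA & Hinj) r _ lam Hlam M N HM HN.
  assert (Hk : exists k, lam = (2 * k)%nat /\ (k <= 3)%nat)
    by (destruct Hlam as [-> | [-> | ->]]; [exists 1%nat | exists 2%nat | exists 3%nat]; lia).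
  destruct Hk as (k & -> & Hk).
  unfold icosa_power_sum.
  rewrite !(sum_relabel A _ 11 (fun p => _ p ^ _) HA Hinj).
  rewrite !(similar_icosa_power_sum L O _ s r k HL) by assumption.
  apply affine_power_sum_moments; intros i Hi.
  rewrite !icosa_moments by lia.
  rewrite !transpose_norm, <- !dist3_sq, HM, HN by exact HL.
  reflexivity.
Qed.
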